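(* Let $M$ be the set of $H\times W$ images in HSV format $x=\{(h,s,v)_{ij}\}^{H\times W}$ with $s_{ij},v_{ij}\in[0,1]$ for which the transformation below is well defined (nonzero denominators). For such $x$ let $s_{\mathrm{mean}},s_{\max},v_{\mathrm{mean}},v_{\max}$ be the means and maximums over pixels of the saturation and brightness values. For $\theta=(\theta_S,\theta_V)$ define \[\mathsf{SV}(x,\theta)=\left\{\left(h,\ \frac{s+(2^{\theta_S}-1)s_{\mathrm{mean}}}{\mathsf{MAX}},\ \frac{v+(2^{\theta_V}-1)v_{\mathrm{mean}}}{\mathsf{MAX}}\right)_{ij}\right\}^{H\times W},\] where $\mathsf{MAX}=\max\big(s_{\max}+(2^{\theta_S}-1)s_{\mathrm{mean}},\ v_{\max}+(2^{\theta_V}-1)v_{\mathrm{mean}}\big)$. Then for all $x\in M$ and $\theta_1,\theta_2\in\mathbb{R}_{\ge0}^2$, $\mathsf{SV}(\mathsf{SV}(x,\theta_1),\theta_2)=\mathsf{SV}(x,\theta_1+\theta_2)$.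
   Context: The hue $h$ is left unchanged by $\mathsf{SV}$; only saturation and brightness values are shifted and renormalized. *)

From HB Require Import structures.
From mathcomp Require Import all_boot all_order all_algebra.
From mathcomp Require Import all_classical all_reals all_analysis.
Set Implicit Arguments. Unset Strict Implicit. Unset Printing Implicit Defensive.
Import Order.TTheory GRing.Theory Num.Theory.
Local Open Scope ring_scope.

(* An H x W HSV image: pixel (i,j) is the triple ((h, s), v). *)
Definition hsv_image (R : realType) (H W : nat) := 'M[(R * R * R)%type]_(H, W).

Section SV.
Variables (R : realType) (H W : nat).

Definition hue (x : hsv_image R H W) i j : R := (x i j).1.1.
Definition sat (x : hsv_image R H W) i j : R := (x i j).1.2.
Definition bri (x : hsv_image R H W) i j : R := (x i j).2.

Definition chmean (c : 'I_H -> 'I_W -> R) : R :=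
  (\sum_(i < H) \sum_(j < W) c i j) / (H * W)%:R.
Definition chmax (c : 'I_H -> 'I_W -> R) : R :=
  \big[Num.max/0]_(i < H) \big[Num.max/0]_(j < W) c i j.

Definition SVmax (x : hsv_image R H W) (th : R * R) : R :=
  Num.max (chmax (sat x) + (2 `^ th.1 - 1) * chmean (sat x))
          (chmax (bri x) + (2 `^ th.2 - 1) * chmean (bri x)).

Definition SV (x : hsv_image R H W) (th : R * R) : hsv_image R H W :=
  \matrix_(i, j)
    (hue x i j,
     (sat x i j + (2 `^ th.1 - 1) * chmean (sat x)) / SVmax x th,
     (bri x i j + (2 `^ th.2 - 1) * chmean (bri x)) / SVmax x th).

Definition inM (x : hsv_image R H W) : Prop :=
  (forall i j, 0 <= sat x i j <= 1 /\ 0 <= bri x i j <= 1) /\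
  (forall th : R * R, 0 <= th.1 -> 0 <= th.2 -> SVmax x th != 0).

End SV.

(** Each channel of [SV x th] is the image of the corresponding channel of
    [x] under an affine map [t |-> (t + k) / M] with [k >= 0] and [M > 0].
    Such a map commutes with the mean and, being nondecreasing, with the
    maximum.  Hence applying the exponent [b] after the exponent [a] shifts a
    channel of [x] by [(2^a - 1 + (2^b - 1) + (2^a - 1)(2^b - 1)) * mean =
    (2^(a+b) - 1) * mean], while the second normalizer is
    [MAX(th1 + th2) / MAX(th1)], so the two normalizers combine into
    [MAX(th1 + th2)]. *)

From HB Require Import structures.
From mathcomp Require Import all_boot all_order all_algebra.
From mathcomp Require Import all_classical all_reals all_analysis.
From mathcomp Require Import ring.

Set Implicit Arguments.
Unset Strict Implicit.
Unset Printing Implicit Defensive.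
Import Order.TTheory GRing.Theory Num.Theory.
Local Open Scope ring_scope.

Lemma bigmax_homo d (T : orderType d) (I : finType) (j0 : I) (x : T)
    (F : I -> T) (g : T -> T) :
  {homo g : a b / (a <= b)%O} -> (x <= g x)%O -> (forall i, (x <= F i)%O) ->
  \big[Order.max/x]_i g (F i) = g (\big[Order.max/x]_i F i).
Proof.
move=> g_homo xg xF; apply/le_anti/andP; split.
  apply: bigmax_le => [|i _]; last exact/g_homo/le_bigmax.
  exact: le_trans xg (g_homo _ _ (bigmax_ge_id _ _ _ _)).
have [i0 _ ->] := eq_bigmax j0 predT F isT (fun i _ => xF i).
exact: le_bigmax (fun i => g (F i)) i0.
Qed.

Section Channel.
Variables (R : realType) (H W : nat).
Implicit Types (c : 'I_H -> 'I_W -> R) (k M : R).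

Definition chaffine c k M i j : R := (c i j + k) / M.

Lemma chmean_ge0 c : (forall i j, 0 <= c i j) -> 0 <= chmean c.
Proof. by move=> c0; rewrite divr_ge0 // sumr_ge0 // => i _; rewrite sumr_ge0. Qed.

Lemma chmax_ge0 c : 0 <= chmax c.
Proof. exact: bigmax_ge_id. Qed.

Lemma chmean_affine c k M :
  (0 < H * W)%N -> chmean (chaffine c k M) = (chmean c + k) / M.
Proof.
move=> HW_gt0; rewrite /chmean /chaffine.
under eq_bigr => i _ do rewrite -mulr_suml big_split /= sumr_const card_ord.
rewrite -mulr_suml big_split /= sumr_const card_ord -mulrnA mulnC.
by rewrite -[k *+ _]mulr_natr mulrAC mulrDl mulfK // pnatr_eq0 -lt0n.
Qed.

Lemma chmax_affine c k M :
  (0 < H * W)%N -> (forall i j, 0 <= c i j) -> 0 <= k -> 0 < M ->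
  chmax (chaffine c k M) = (chmax c + k) / M.
Proof.
rewrite muln_gt0 => /andP[H_gt0 W_gt0] c0 k0 M0.
pose i0 := Ordinal H_gt0; pose j0 := Ordinal W_gt0.
have g_homo : {homo (fun t => (t + k) / M) : a b / a <= b}.
  by move=> a b ab; rewrite ler_wpM2r ?lerD2r // invr_ge0 ltW.
have g0 : 0 <= (0 + k) / M by rewrite add0r divr_ge0 // ltW.
rewrite /chmax /chaffine -(bigmax_homo i0 g_homo g0) => [|i]; last first.
  exact: bigmax_ge_id.
by apply: eq_bigr => i _; rewrite (bigmax_homo j0 g_homo g0).
Qed.

End Channel.

Section Gain.
Variable R : realType.

Definition gain (t : R) : R := 2 `^ t - 1.

Lemma gain_ge0 t : 0 <= t -> 0 <= gain t.
Proof. by move=> t0; rewrite subr_ge0 -{1}(powRr0 2) ler_powR // ler1n. Qed.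

Lemma gainD s t : gain (s + t) = gain s + gain t + gain s * gain t.
Proof. by rewrite /gain powRD ?pnatr_eq0 ?implybT //; ring. Qed.

Lemma shift_gain_comp (u m s t M : R) :
  (u + gain s * m) / M + gain t * ((m + gain s * m) / M)
  = (u + gain (s + t) * m) / M.
Proof. by rewrite gainD; ring. Qed.

End Gain.

Section SVImage.
Variables (R : realType) (H W : nat) (x : hsv_image R H W).
Implicit Types th : R * R.

Lemma hue_SV th : hue (SV x th) = hue x.
Proof. by apply/funext => i; apply/funext => j; rewrite /hue mxE. Qed.

Lemma sat_SV th :
  sat (SV x th) = chaffine (sat x) (gain th.1 * chmean (sat x)) (SVmax x th).
Proof. by apply/funext => i; apply/funext => j; rewrite /sat mxE. Qed.

Lemma bri_SV th :
  bri (SV x th) = chaffine (bri x) (gain th.2 * chmean (bri x)) (SVmax x th).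
Proof. by apply/funext => i; apply/funext => j; rewrite /bri mxE. Qed.

Hypothesis xM : inM x.

Lemma sat_ge0 i j : 0 <= sat x i j.
Proof. by case: xM => /(_ i j) [/andP[]]. Qed.

Lemma bri_ge0 i j : 0 <= bri x i j.
Proof. by case: xM => /(_ i j) [_ /andP[]]. Qed.

Lemma SVmax_gt0 th : 0 <= th.1 -> 0 <= th.2 -> 0 < SVmax x th.
Proof.
move=> th1 th2; rewrite lt_def xM.2 // le_max addr_ge0 ?chmax_ge0 //.
by rewrite mulr_ge0 ?gain_ge0 ?chmean_ge0 //; exact: sat_ge0.
Qed.

Lemma SVmax_SV th1 th2 : (0 < H * W)%N -> 0 <= th1.1 -> 0 <= th1.2 ->
  SVmax (SV x th1) th2 = SVmax x (th1.1 + th2.1, th1.2 + th2.2) / SVmax x th1.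
Proof.
move=> HW_gt0 th11 th12; have M1_gt0 := SVmax_gt0 th11 th12.
have sat0 := sat_ge0; have bri0 := bri_ge0.
have sat_shift_ge0 := mulr_ge0 (gain_ge0 th11) (chmean_ge0 sat0).
have bri_shift_ge0 := mulr_ge0 (gain_ge0 th12) (chmean_ge0 bri0).
rewrite /SVmax sat_SV bri_SV !chmax_affine ?chmean_affine ?shift_gain_comp //.
by rewrite -maxr_pMl // invr_ge0 ltW.
Qed.

End SVImage.

Theorem lemma4 (R : realType) (H W : nat) (x : hsv_image R H W)
  (th1 th2 : (R * R)%type) :
  inM x ->
  0 <= th1.1 -> 0 <= th1.2 -> 0 <= th2.1 -> 0 <= th2.2 ->
  SV (SV x th1) th2 = SV x (th1.1 + th2.1, th1.2 + th2.2).
Proof.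
move=> xM th11 th12 th21 th22.
case: H x xM => [|H] x xM; first by apply/matrixP => -[].
case: W x xM => [|W] x xM; first by apply/matrixP => ? [].
have M1_neq0 : SVmax x th1 != 0 by exact: xM.2.
apply/matrixP => i j; rewrite [LHS]mxE [RHS]mxE.
rewrite SVmax_SV // hue_SV sat_SV bri_SV !chmean_affine // !shift_gain_comp.
by rewrite !invf_div !mulrA !divfK.
Qed.
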